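(* Let $2/5 < r < 1$, put $p = \left\lceil \frac{5r-2}{1-r} \right\rceil$ and $\alpha = p - \frac{5r-2}{1-r}$, and let $\alpha = (0.\alpha_1 \alpha_2 \cdots)_2$ be the binary expansion of $\alpha$ with infinitely many zero digits. Define binary words $w^{\langle 0 \rangle} = \emptyset$ and $w^{\langle i \rangle} = w^{\langle i-1 \rangle} w^{\langle i-1 \rangle}\, 01011\, 0^{p - \alpha_i}$ for $i \geq 1$; each $w^{\langle i \rangle}$ is a proper prefix of $w^{\langle i+1 \rangle}$, and let $w$ be the infinite binary word which is the limit of this sequence. Then $\lim_{n \to \infty} |Z(w^{(n)})|/n = r$.
   Context: For a binary word $x$, $x^j$ denotes $j$ concatenated copies of $x$ ($x^0$ is empty), and juxtaposition denotes concatenation. $w^{(n)}$ denotes the initial subword of length $n$ of $w$, and $Z(u)$ is the set of indices $i$ with $u_i = 0$. *)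

From HB Require Import structures.
From mathcomp Require Import all_boot all_order all_algebra.
From mathcomp Require Import all_classical all_reals all_analysis.
Set Implicit Arguments. Unset Strict Implicit. Unset Printing Implicit Defensive.
Import Order.TTheory GRing.Theory Num.Theory.
Local Open Scope ring_scope.

(* Binary words are [seq bool]; digit 0 is [false], digit 1 is [true]. *)

(* i-th binary digit (i >= 1) of alpha >= 0, in the expansion with infinitely
   many zero digits: alpha_i = floor(2^i alpha) mod 2. *)
Definition bin_digit {R : realType} (alpha : R) (i : nat) : bool :=
  odd (absz (Num.floor (alpha * 2 ^+ i))).

Fixpoint wstage (p : nat) (a : nat -> bool) (i : nat) : seq bool :=
  match i with
  | 0 => [::]
  | i'.+1 =>
      let u := wstage p a i' in
      u ++ u ++ [:: false; true; false; true; true] ++ nseq (p - a i'.+1)%N false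
  end.

(* The limit infinite word: its n-th letter is the n-th letter of w^<n+1>
   (which has length >= 5(2^(n+1)-1) > n; the stages are prefixes of each other). *)
Definition wlim (p : nat) (a : nat -> bool) (n : nat) : bool :=
  nth false (wstage p a n.+1) n.

Definition wprefix (w : nat -> bool) (n : nat) : seq bool := mkseq w n.

Definition nzeros (u : seq bool) : nat := count negb u.

From HB Require Import structures.
From mathcomp Require Import all_boot all_order all_algebra.
From mathcomp Require Import all_classical all_reals all_analysis.
From mathcomp Require Import zify ring lra.
Set Implicit Arguments. Unset Strict Implicit. Unset Printing Implicit Defensive.
Import Order.TTheory GRing.Theory Num.Theory.
Import numFieldNormedType.Exports.
Local Open Scope classical_set_scope.
Local Open Scope ring_scope.

(** Measure a word u by its discrepancy |Z(u)| - r|u|.  By the choice of p and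
   alpha the block 01011 0^(p - alpha_i) has discrepancy (1 - r)(alpha - alpha_i),
   so w^<j> has discrepancy (1 - r)(frac(2^j alpha) - alpha), bounded by 1.  Going
   down the doubling structure, the prefix w^(n) splits into O(log n) stages and
   blocks of length at most p + 5, so its discrepancy is O(log n) and
   |Z(w^(n))|/n - r = O(log n / n) tends to 0. *)

Lemma trunc_log2_double_le m n :
  (0 < m)%N -> (m.*2 <= n)%N -> ((trunc_log 2 m).+1 <= trunc_log 2 n)%N.
Proof. by move=> m0 mn; rewrite -trunc_log2_double // leq_trunc_log. Qed.

Lemma sqrS_leq_exp2 k : (k.+1 ^ 2 <= 2 ^ k.+2)%N.
Proof.
elim: k => [|k IH] //; case: k IH => [|[|k]] IH //.
rewrite (expnS 2); move: IH; rewrite -!mulnn; nia.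
Qed.

Lemma floor_mul2 (R : archiRealFieldType) (y : R) : 0 <= y ->
  Num.floor (y * 2) = 2 * Num.floor y + (odd `|Num.floor (y * 2)|)%:R.
Proof.
move=> y0; have f0 : 0 <= Num.floor y by rewrite floor_ge0.
have lo : 2 * Num.floor y <= Num.floor (y * 2).
  by rewrite floor_ge_int rmorphM /= mulrC ler_pM2r ?floor_le.
have hi : Num.floor (y * 2) < 2 * Num.floor y + 2.
  rewrite floor_lt_int rmorphD rmorphM /=.
  by have := floorD1_gt y; rewrite rmorphD /= => ?; nra.
move: lo hi; case: (Num.floor (y * 2)) => [g|g]; case: (Num.floor y) f0 => [f|f] //= _.
- move=> lo hi; have [->|->] : (g = 2 * f \/ g = 2 * f + 1)%N by lia.
  + by rewrite oddM /=; lia.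
  + by rewrite oddD oddM /=; lia.
all: lia.
Qed.

Lemma trunc_log2_div_cvg0 (R : realType) :
  (fun n => (trunc_log 2 n).+1%:R / n%:R : R) @ \oo --> 0.
Proof.
apply/cvgr0Pnorm_lt => e e0.
set M := Num.truncn (4 / e).
near=> n.
set k := trunc_log 2 n.
have n0 : (0 < n)%N by near: n; exists 1%N.
have kM : (M <= k)%N by apply: trunc_log_max; near: n; exists (2 ^ M)%N.
have kE : 4 / e < k.+1%:R :> R by rewrite (lt_le_trans (truncnS_gt _)) // ler_nat.
have sq : k.+1%:R ^+ 2 <= 4 * n%:R :> R.
  rewrite -natrX -(natrM R 4) ler_nat (leq_trans (sqrS_leq_exp2 k)) //.
  by rewrite !expnS mulnA leq_mul2l trunc_logP.
have nR : 0 < n%:R :> R by rewrite ltr0n.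
rewrite ger0_norm ?divr_ge0 // ltr_pdivrMr //.
rewrite ltr_pdivrMr // in kE.
nra.
Unshelve. all: end_near.
Qed.

Lemma cvg0_div_trunc_log2_bound (R : realType) (f : nat -> R) (D : R) :
  (forall n, `|f n| <= D * (trunc_log 2 n).+1%:R) ->
  (fun n => f n / n%:R) @ \oo --> 0.
Proof.
move=> fD; set g := fun n => (trunc_log 2 n).+1%:R / n%:R : R.
have Dg : (fun n => D * g n) @ \oo --> 0.
  by rewrite -(mulr0 D); apply: cvgM; [exact: cvg_cst | exact: trunc_log2_div_cvg0].
have bound n : - (D * g n) <= f n / n%:R <= D * g n.
  rewrite -ler_norml normrM normfV normr_nat /g mulrA.
  by rewrite ler_wpM2r ?invr_ge0.
apply: (@squeeze_cvgr _ _ _ _ (fun n => - (D * g n)) (fun n => D * g n)) => //.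
- exact: nearW.
- by rewrite -oppr0; apply: cvgN.
Qed.

Lemma wstage_prefix p a i j : (i <= j)%N -> exists t, wstage p a j = wstage p a i ++ t.
Proof.
elim: j => [|j IH]; first by rewrite leqn0 => /eqP ->; exists [::]; rewrite cats0.
rewrite leq_eqVlt => /orP [/eqP -> | ]; first by exists [::]; rewrite cats0.
by rewrite ltnS => /IH [t Ht] /=; rewrite Ht -catA; eexists.
Qed.

Lemma size_wstage_ge p a i : (i <= size (wstage p a i))%N.
Proof. by elim: i => [|i IH] //=; rewrite !size_cat /=; lia. Qed.

Lemma wprefix_wlim p a n : wprefix (wlim p a) n = take n (wstage p a n).
Proof.
apply: (@eq_from_nth _ false); first by rewrite size_mkseq size_takel ?size_wstage_ge.
move=> k; rewrite size_mkseq => kn.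
rewrite nth_mkseq // nth_take // /wlim.
have [t ->] := @wstage_prefix p a k.+1 n kn.
by rewrite nth_cat (leq_trans _ (size_wstage_ge p a k.+1)).
Qed.

Definition discrepancy {R : realFieldType} (r : R) (s : seq bool) : R :=
  (nzeros s)%:R - r * (size s)%:R.

Section Discrepancy.
Variables (R : realFieldType) (r : R).
Local Notation discrepancy := (discrepancy r).

Lemma discrepancy_cat s t : discrepancy (s ++ t) = discrepancy s + discrepancy t.
Proof. by rewrite /discrepancy /nzeros count_cat size_cat !natrD; ring. Qed.

Hypothesis r_itv : 0 <= r <= 1.

Lemma norm_discrepancy_le_size s : `|discrepancy s| <= (size s)%:R.
Proof.
case/andP: r_itv => r0 r1; rewrite /discrepancy /nzeros.
have zs : (count negb s)%:R <= (size s)%:R :> R by rewrite ler_nat count_size.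
have z0 : 0 <= (count negb s)%:R :> R by [].
rewrite ler_norml; apply/andP; split; nra.
Qed.

Lemma norm_discrepancy_take_wstage p a :
  (forall j, `|discrepancy (wstage p a j)| <= 1) ->
  forall i n, (n <= size (wstage p a i))%N ->
  `|discrepancy (take n (wstage p a i))| <= (p + 7)%:R * (trunc_log 2 n).+1%:R.
Proof.
move=> stage_le1; elim=> [|i IH] n.
  by rewrite leqn0 => /eqP ->; rewrite /discrepancy /= mulr0 subr0 normr0 mulr_ge0.
set u := wstage p a i; have u_le1 : `|discrepancy u| <= 1 := stage_le1 i.
rewrite /= !size_cat => n_le.
have [n_le_u|u_lt_n] := leqP n (size u); first by rewrite takel_cat //; apply: IH.
rewrite take_cat ltnNge (ltnW u_lt_n) /=.
set m := (n - size u)%N.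
have [m_le_u|u_lt_m] := leqP m (size u).
  rewrite takel_cat // discrepancy_cat.
  have logm : (trunc_log 2 m).+2%:R <= (trunc_log 2 n).+1%:R :> R.
    by rewrite ler_nat ltnS trunc_log2_double_le /m //; lia.
  have p7 : 1 <= (p + 7)%:R :> R by rewrite ler1n addnS.
  apply: le_trans (ler_normD _ _) _; have := IH m m_le_u.
  rewrite -natr1 in logm; nra.
rewrite take_cat ltnNge (ltnW u_lt_m) /= !discrepancy_cat.
set b := take _ _.
have b_le : `|discrepancy b| <= (p + 5)%:R.
  apply: le_trans (norm_discrepancy_le_size _) _; rewrite ler_nat /b size_take /=.
  by case: ifP; rewrite size_nseq; lia.
have log_ge1 : 1 <= (trunc_log 2 n).+1%:R :> R by rewrite ler1n.
have p7 : (p + 7)%:R = (p + 5)%:R + 2 :> R by rewrite -natrD -addnA.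
have : `|discrepancy u + (discrepancy u + discrepancy b)| <= 1 + (1 + (p + 5)%:R).
  apply: le_trans (ler_normD _ _) _; apply: lerD => //.
  by apply: le_trans (ler_normD _ _) _; apply: lerD.
have : 0 <= (p + 5)%:R :> R by [].
rewrite p7; nra.
Qed.

End Discrepancy.

Section StageDiscrepancy.
Variables (R : realType) (r alpha : R) (p : nat).
Hypotheses (alpha_ge0 : 0 <= alpha) (alpha_lt1 : alpha < 1) (p_gt0 : (0 < p)%N).
Hypothesis (r_p_alpha : (1 - r) * (p%:R - alpha) = 5 * r - 2).

Lemma discrepancy_block (d : bool) :
  discrepancy r ([:: false; true; false; true; true] ++ nseq (p - d) false) =
  2 + (p%:R - d%:R) - r * (5 + (p%:R - d%:R)).
Proof.
rewrite /discrepancy /nzeros /= count_nseq size_nseq /= mul1n -natrB.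
  by rewrite !natrD; ring.
by case: d.
Qed.

Lemma discrepancy_wstage j :
  discrepancy r (wstage p (bin_digit alpha) j) =
  (1 - r) * (alpha * 2 ^+ j - (Num.floor (alpha * 2 ^+ j))%:~R - alpha).
Proof.
elim: j => [|j IH].
  by rewrite /discrepancy /= expr0 mulr1 (@floor_def _ _ 0) ?alpha_ge0 //=; ring.
rewrite /= !discrepancy_cat IH discrepancy_block /bin_digit exprS mulrCA (mulrC 2).
set F := Num.floor (alpha * 2 ^+ j); set G := Num.floor (alpha * 2 ^+ j * 2).
set d := odd `|G|.
have GE : G = 2 * F + d%:R by apply: floor_mul2; rewrite mulr_ge0 ?exprn_ge0.
have -> : G%:~R = 2 * F%:~R + d%:R :> R by rewrite GE intrD intrM -pmulrn mulrz_nat.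
apply/eqP; rewrite -subr_eq0 -(subrr (5 * r - 2)) -{1}r_p_alpha; apply/eqP; ring.
Qed.

Hypothesis r_itv : 0 <= r < 1.

Lemma norm_discrepancy_wstage_le1 j :
  `|discrepancy r (wstage p (bin_digit alpha) j)| <= 1.
Proof.
case/andP: r_itv => r0 r1.
rewrite discrepancy_wstage normrM gtr0_norm ?subr_gt0 //.
set y := alpha * 2 ^+ j.
have lo := floor_le y; have := floorD1_gt y; rewrite intrD mulr1z => hi.
set F : R := (Num.floor y)%:~R in lo hi *.
have : `|y - F - alpha| <= 1.
  by rewrite ler_norml; apply/andP; split; have := alpha_ge0; have := alpha_lt1; lra.
by have := normr_ge0 (y - F - alpha); nra.
Qed.

Lemma norm_discrepancy_wprefix n :
  `|discrepancy r (wprefix (wlim p (bin_digit alpha)) n)| <=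
  (p + 7)%:R * (trunc_log 2 n).+1%:R.
Proof.
case/andP: r_itv => r0 r1.
rewrite wprefix_wlim; apply: norm_discrepancy_take_wstage; rewrite ?size_wstage_ge //.
  by rewrite r0 ltW.
exact: norm_discrepancy_wstage_le1.
Qed.

End StageDiscrepancy.

Theorem lemma4p14 (R : realType) (r : R) (hr1 : 2 / 5 < r) (hr2 : r < 1) :
  let x := (5 * r - 2) / (1 - r) in
  let p : int := Num.ceil x in
  let alpha : R := p%:~R - x in
  let w := wlim (absz p) (bin_digit alpha) in
  (fun n : nat => (nzeros (wprefix w n))%:R / n%:R : R) @ \oo --> r.
Proof.
move=> x p alpha w.
have r1 : 0 < 1 - r by rewrite subr_gt0.
have x_gt0 : 0 < x by rewrite divr_gt0 //; move: hr1; rewrite ltr_pdivrMr //; lra.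
have p_gt0 : 0 < p by rewrite ceil_gt0.
have absp_gt0 : (0 < absz p)%N by rewrite absz_gt0 gt_eqF.
have pE : (absz p)%:R = p%:~R :> R by rewrite -[in RHS](gez0_abs (ltW p_gt0)).
have alpha_ge0 : 0 <= alpha by rewrite subr_ge0 ceil_ge.
have alpha_lt1 : alpha < 1.
  by have := ceil_itv x; rewrite intrB mulr1z /alpha => /andP[+ _]; lra.
have r_p_alpha : (1 - r) * ((absz p)%:R - alpha) = 5 * r - 2.
  have -> : (absz p)%:R - alpha = x by rewrite pE /alpha; ring.
  by rewrite /x mulrC divfK ?gt_eqF.
have r_itv : 0 <= r < 1 by apply/andP; split=> //; lra.
have bound := norm_discrepancy_wprefix alpha_ge0 alpha_lt1 absp_gt0 r_p_alpha r_itv.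
rewrite -[r in _ --> r]addr0.
apply: (cvg_trans (G := (fun n => r + discrepancy r (wprefix w n) / n%:R) @ \oo)).
  apply: near_eq_cvg; near=> n.
  have n_gt0 : 0 < n%:R :> R by rewrite ltr0n; near: n; exists 1%N.
  by rewrite /discrepancy size_mkseq mulrBl mulfK ?gt_eqF // addrC subrK.
apply: cvgD; first exact: cvg_cst.
exact: cvg0_div_trunc_log2_bound bound.
Unshelve. all: end_near.
Qed.
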